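(* Let $G$ be a finite abelian group and $k$ a positive integer such that: (1) $|G| = k^2$ and $\exp(G)$ divides $k$; (2) $N \le G$ with $|N| = k$; (3) the product of all elements of $N$ is $1$; (4) the product of all elements of the quotient group $G/N$ is the identity coset $N$. Then for any listing $N = [n_1, \ldots, n_k]$ there is a complete set of left coset representatives $T = [t_1,\dots,t_k]$ of $N$ in $G$ such that the table of $G$ based on $N$ and $T$ is a pandiagonal magic Cayley-sudoku table.
   Context: All groups are finite and written multiplicatively with identity $1$; $\exp(G)$ is the exponent of $G$. A Cayley table of $G$ is a square array whose rows are labeled by a listing of all elements of $G$ and columns by a listing of all elements of $G$, the entry in row labeled $r$ and column labeled $c$ being $rc$; its body is the array of entries. A Cayley-sudoku table of $G$ is a Cayley table of $G$ whose body is partitioned into uniformly sized rectangular blocks (each block formed by a set of consecutive rows and consecutive columns) such that each element of $G$ appears exactly once in each block. In a $k\times k$ array, a broken diagonal is the list of entries in positions $(\ell, \ell + j)$, $\ell = 1, \ldots, k$, for fixed $j \in \{1, \ldots, k\}$, and a broken antidiagonal is the list of entries in positions $(\ell, j-\ell)$, $\ell=1,\dots,k$, for fixed $j$, indices mod $k$ with representatives in $\{1,\dots,k\}$. Row products are taken left to right; column, broken diagonal and broken antidiagonal products top to bottom. A Cayley-sudoku table is pandiagonal magic if its blocks are square and every row, column, broken diagonal and broken antidiagonal product of each block equals $1$. Given $N = [n_1, \ldots, n_k]$ and a complete set of left coset representatives $T = [t_1, \ldots, t_k]$ of $N$ in $G$, the table of $G$ based on $N$ and $T$ is the Cayley table of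 $G$ whose rows, top to bottom, are labeled $t_1 n_1, \ldots, t_k n_1, t_1 n_2, \ldots, t_k n_2, \ldots, t_1 n_k, \ldots, t_k n_k$ and whose columns, left to right, are labeled $n_1 t_1, \ldots, n_k t_1, n_1 t_2, \ldots, n_k t_2, \ldots, n_1 t_k, \ldots, n_k t_k$, with body partitioned into the $k^2$ blocks of size $k\times k$ given by rows $\{t_1 n_m,\dots,t_k n_m\}$ and columns $\{n_1 t_i,\dots,n_k t_i\}$, $1\le m,i\le k$. *)

From mathcomp Require Import all_boot all_fingroup abelian.
Set Implicit Arguments. Unset Strict Implicit. Unset Printing Implicit Defensive.
Local Open Scope group_scope.

Section CayleySudoku.
Variable gT : finGroupType.

Definition is_listing (N : {set gT}) (k : nat) (n : seq gT) : Prop :=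
  size n = k /\ uniq n /\ (forall x, (x \in n) = (x \in N)).

Definition left_transversal_seq (N G : {set gT}) (k : nat) (t : seq gT) : Prop :=
  [/\ size t = k, {subset t <= G},
      uniq [seq x *: N | x <- t]
    & forall g, g \in G -> exists2 x, x \in t & g \in x *: N].

(* Row (m,a) of the table (0-based; block-row m, row a inside the block)
   is labeled t_a n_m; column (i,b) is labeled n_b t_i. *)
Definition row_label (k : nat) (n t : seq gT) (p : 'I_k * 'I_k) : gT :=
  nth 1 t p.2 * nth 1 n p.1.
Definition col_label (k : nat) (n t : seq gT) (p : 'I_k * 'I_k) : gT :=
  nth 1 n p.2 * nth 1 t p.1.

Definition block_entry (n t : seq gT) (m i a b : nat) : gT :=
  (nth 1 t a * nth 1 n m) * (nth 1 n b * nth 1 t i).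

Definition is_cayley_table (G : {set gT}) (k : nat) (n t : seq gT) : Prop :=
  [/\ injective (@row_label k n t), forall p, @row_label k n t p \in G
    & forall g, g \in G -> exists p, @row_label k n t p = g] /\
  [/\ injective (@col_label k n t), forall p, @col_label k n t p \in G
    & forall g, g \in G -> exists p, @col_label k n t p = g].

Definition is_sudoku (G : {set gT}) (k : nat) (n t : seq gT) : Prop :=
  forall m i : 'I_k, forall g, g \in G ->
    #|[set p : 'I_k * 'I_k | block_entry n t m i p.1 p.2 == g]| = 1%N.

(* Pandiagonal magic: in each (square, k x k) block, every row, column,
   broken diagonal and broken antidiagonal product equals 1.
   0-based: broken diagonal c = positions (a, (a+c) mod k),
   broken antidiagonal c = positions (a, (c-a) mod k). *)
Definition is_pandiagonal_magic_blocks (k : nat) (n t : seq gT) : Prop :=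
  forall m i c : 'I_k,
    [/\ \prod_(b < k) block_entry n t m i c b = 1,
        \prod_(a < k) block_entry n t m i a c = 1,
        \prod_(a < k) block_entry n t m i a ((a + c) %% k) = 1
      & \prod_(a < k) block_entry n t m i a ((c + k - a) %% k) = 1].

Definition pandiagonal_magic_cayley_sudoku (G : {set gT}) (k : nat)
  (n t : seq gT) : Prop :=
  [/\ is_cayley_table G k n t, is_sudoku G k n t
    & is_pandiagonal_magic_blocks k n t].

End CayleySudoku.

(* Pick coset representatives t_1, ..., t_k whose product is 1: the cosets of
   G/N multiply to N, so the product of any set of representatives lies in N,
   and dividing one representative by it repairs this.  With w = n_m t_i, the
   entry at local position (a, b) of block (m, i) is t_a n_b w, so a product of
   k entries along a line is (prod of the t's met) (prod of the n's met) w^k.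
   Along every row, column and broken (anti)diagonal each index sequence is
   constant or a permutation of 0..k-1, so each factor is 1, because exp(G)
   divides k and N and t have product 1.  The Cayley and sudoku properties hold
   because (a, b) |-> t_a n_b is injective on the k^2 pairs, hence onto G. *)

From mathcomp Require Import all_boot all_fingroup abelian.
Set Implicit Arguments. Unset Strict Implicit. Unset Printing Implicit Defensive.
Local Open Scope group_scope.

Lemma prod_const_ord (gT : finGroupType) k (x : gT) : \prod_(i < k) x = x ^+ k.
Proof. by rewrite big_const_ord -Monoid.iteropE. Qed.

Lemma card_fiber_inj (T : finType) (rT : eqType) (f : T -> rT) (x : T) :
  injective f -> #|[set y | f y == f x]| = 1%N.
Proof.
move=> f_inj; rewrite -(cards1 x); apply: eq_card => y.
by rewrite !inE (inj_eq f_inj).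
Qed.

Lemma inj_card_onto_set (T aT : finType) (f : T -> aT) (A : {set aT}) :
    injective f -> (forall x, f x \in A) -> #|T| = #|A| ->
  forall y, y \in A -> exists x, f x = y.
Proof.
move=> f_inj fA cardT y; have /eqP <- : f @: T == A.
  rewrite eqEcard card_imset // cardT leqnn andbT.
  by apply/subsetP => _ /imsetP[x _ ->].
by case/imsetP => x _ ->; exists x.
Qed.

Lemma mem_nth1 (gT : finGroupType) (A : {group gT}) (s : seq gT) i :
  {subset s <= A} -> nth 1 s i \in A.
Proof.
move=> sA; have [lt_i_s | le_s_i] := ltnP i (size s); first by rewrite sA ?mem_nth.
by rewrite nth_default.
Qed.

Section AbelianProducts.
Variables (gT : finGroupType) (G : {group gT}).
Hypothesis cGG : abelian G.

Lemma abelian_bigcprod (I : Type) (r : seq I) (P : pred I) :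
  \big[cprod/1]_(i <- r | P i) G = (\prod_(i <- r | P i) G)%G.
Proof. exact: (bigcprodEY r (H := fun=> G) cGG (fun _ _ => subxx _)). Qed.

Lemma perm_prod_abelian (s1 s2 : seq gT) :
  {subset s1 <= G} -> perm_eq s1 s2 -> \prod_(x <- s1) x = \prod_(x <- s2) x.
Proof. exact: perm_bigcprod (abelian_bigcprod s1 predT). Qed.

Lemma prod_uniq_abelian (s : seq gT) (A : {pred gT}) :
  uniq s -> s =i A -> {subset s <= G} -> \prod_(x <- s) x = \prod_(x in A) x.
Proof.
move=> s_uniq sA sG; rewrite -[RHS]big_filter; apply: perm_prod_abelian sG _.
apply: uniq_perm (filter_uniq _ (index_enum_uniq _)) _ => // x.
by rewrite mem_filter mem_index_enum andbT sA.
Qed.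

Lemma reindex_inj_prod_abelian (I : finType) (h : I -> I) (F : I -> gT) :
  injective h -> (forall i, F i \in G) -> \prod_i F (h i) = \prod_i F i.
Proof.
move=> /injF_bij hbij FG; symmetry.
exact: reindex_bigcprod (onW_bij _ hbij) (abelian_bigcprod _ _) (in1W FG).
Qed.

Lemma prod_nth_inj_abelian k (s : seq gT) (h : 'I_k -> 'I_k) :
    size s = k -> {subset s <= G} -> injective h ->
  \prod_(j < k) nth 1 s (h j) = \prod_(x <- s) x.
Proof.
move=> size_s sG h_inj; rewrite (big_nth 1) size_s big_mkord.
by apply: reindex_inj_prod_abelian (fun j : 'I_k => nth 1 s j) h_inj _ => j; apply: mem_nth1.
Qed.

Lemma prodMg_abelian (I : Type) (r : seq I) (F H : I -> gT) :
    (forall i, F i \in G) -> (forall i, H i \in G) ->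
  \prod_(i <- r) (F i * H i) = \prod_(i <- r) F i * \prod_(i <- r) H i.
Proof.
move=> FG HG; elim: r => [|i r IHr]; first by rewrite !big_nil mulg1.
rewrite !big_cons IHr !mulgA; congr (_ * _); rewrite -!mulgA; congr (_ * _).
by apply/esym/(centsP cGG); rewrite ?group_prod.
Qed.

End AbelianProducts.

Section Transversal.
Variables (gT : finGroupType) (G N : {group gT}).
Hypotheses (cGG : abelian G) (sNG : N \subset G).

Let nNG : G \subset 'N(N) := sub_abelian_norm cGG sNG.

Lemma lcoset_coset x : x \in G -> x *: N = coset N x.
Proof. by move=> /(subsetP nNG) xN; rewrite val_coset // norm_rlcoset. Qed.

Lemma coset_transversal (t : seq gT) :
    {subset t <= G} -> map (coset N) t = enum (G / N) ->
  left_transversal_seq N G #|G / N| t.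
Proof.
move=> tG tGN; split=> //; first by rewrite cardE -tGN size_map.
  have -> : [seq x *: N | x <- t] = map val (map (coset N) t).
    by rewrite -map_comp; apply/eq_in_map => x /tG /lcoset_coset.
  by rewrite (map_inj_uniq val_inj) tGN enum_uniq.
move=> g gG; have : coset N g \in map (coset N) t by rewrite tGN mem_enum mem_quotient.
case/mapP=> x xt gx; exists x => //.
by rewrite lcoset_coset ?tG // -gx val_coset ?(subsetP nNG) ?rcoset_refl.
Qed.

Lemma exists_transversal_prod1 :
    \prod_(C in G / N) C = 1 ->
  exists2 t, left_transversal_seq N G #|G / N| t & \prod_(x <- t) x = 1.
Proof.
move=> prodGN1; pose t0 := [seq repr C | C : coset_of N <- enum (G / N)].
have t0GN : map (coset N) t0 = enum (G / N).
  by rewrite -map_comp (eq_map (@coset_reprK _ _)) map_id.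
have t0G : {subset t0 <= G}.
  move=> x /mapP[C]; rewrite mem_enum => /morphimP[y _ yG ->] ->.
  have /rcosetP[a aN ->] : repr (coset N y) \in N :* y.
    by rewrite -val_coset ?(subsetP nNG) ?mem_repr_coset.
  by rewrite groupM // (subsetP sNG).
have prod_t0N : \prod_(x <- t0) x \in N.
  apply: coset_idr; first by rewrite (subsetP nNG) // big_seq group_prod.
  rewrite big_seq morph_prod => [|x /t0G/(subsetP nNG)//].
  rewrite -big_seq -(big_map _ predT id) t0GN -[RHS]prodGN1.
  apply: (prod_uniq_abelian (quotient_abelian N cGG)); rewrite ?enum_uniq //.
    exact: mem_enum.
  by move=> C; rewrite mem_enum.
case: t0 t0GN t0G prod_t0N => [|x0 r] t0GN t0G.
  by have := group1 (G / N); rewrite -mem_enum -t0GN.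
set p := \prod_(x <- _) x => pN; have pG := subsetP sNG p pN.
have x0G : x0 \in G by rewrite t0G ?mem_head.
have rG : \prod_(x <- r) x \in G.
  by rewrite big_seq group_prod // => x xr; apply/t0G/mem_behead.
exists (x0 * p^-1 :: r).
  apply: coset_transversal => [y|]; last by rewrite /= coset_kerr ?groupV.
  by case/predU1P=> [->|yr]; [rewrite groupM ?groupV | apply/t0G/mem_behead].
rewrite big_cons -mulgA -(centsP cGG _ rG _ (groupVr pG)) mulgA.
by rewrite /p big_cons mulgV.
Qed.

End Transversal.

Section BasedTable.
Variables (gT : finGroupType) (G N : {group gT}) (k : nat) (n t : seq gT).
Hypotheses (cGG : abelian G) (sNG : N \subset G).
Hypotheses (oG : #|G| = (k ^ 2)%N) (expGk : exponent G %| k).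
Hypotheses (prod_N1 : \prod_(x in N) x = 1) (prod_t1 : \prod_(x <- t) x = 1).
Hypotheses (n_listing : is_listing N k n) (t_transversal : left_transversal_seq N G k t).

Let nN (m : 'I_k) : nth 1 n m \in N.
Proof. by case: n_listing => size_n [_ mem_n]; rewrite -mem_n mem_nth ?size_n. Qed.

Let nG b : nth 1 n b \in G.
Proof.
case: n_listing => _ [_ mem_n]; apply: mem_nth1 => x.
by rewrite mem_n => /(subsetP sNG).
Qed.

Let tG a : nth 1 t a \in G.
Proof. by case: t_transversal => _ tG _ _; apply: mem_nth1. Qed.

Lemma row_label_inj : injective (@row_label _ k n t).
Proof.
move=> [m a] [m' a']; rewrite /row_label /= => eq_lab.
have [size_t _ t_uniq _] := t_transversal.
have lcoset_lab (m0 a0 : 'I_k) : (nth 1 t a0 * nth 1 n m0) *: N = nth 1 t a0 *: N.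
  by rewrite lcosetM lcoset_id.
have eq_a : a = a'.
  apply/ord_inj/eqP; rewrite -(nth_uniq (1 *: N) _ _ t_uniq) ?size_map ?size_t //.
  by rewrite !(nth_map 1) ?size_t // -(lcoset_lab m) eq_lab lcoset_lab.
move: eq_lab; rewrite {}eq_a => /mulgI eq_m; congr (_, _); apply/ord_inj/eqP.
case: n_listing => size_n [n_uniq _].
by rewrite -(nth_uniq 1 _ _ n_uniq) ?size_n ?eq_m.
Qed.

Lemma col_labelE (i b : 'I_k) : @col_label _ k n t (i, b) = @row_label _ k n t (b, i).
Proof. exact: (centsP cGG). Qed.

Lemma block_entryE m i (a b : 'I_k) :
  block_entry n t m i a b = @row_label _ k n t (b, a) * (nth 1 n m * nth 1 t i).
Proof.
rewrite /block_entry /row_label /= -!mulgA; congr (_ * _).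
by rewrite !mulgA (centsP cGG _ (nG m) _ (nG b)).
Qed.

Let card_pairs : #|{: 'I_k * 'I_k}| = #|G|.
Proof. by rewrite card_prod card_ord oG mulnn. Qed.

Let row_label_onto : forall g, g \in G -> exists p, @row_label _ k n t p = g.
Proof.
apply: inj_card_onto_set row_label_inj _ _ => [p|]; first exact: groupM.
exact: card_pairs.
Qed.

Lemma based_table_is_cayley : is_cayley_table G k n t.
Proof.
split; split.
- exact: row_label_inj.
- by move=> p; apply: groupM.
- exact: row_label_onto.
- by move=> [i b] [i' b']; rewrite !col_labelE => /row_label_inj[-> ->].
- by move=> [i b]; rewrite col_labelE groupM.
- by move=> g /row_label_onto[[b i] <-]; exists (i, b); rewrite col_labelE.
Qed.

Lemma based_table_is_sudoku : is_sudoku G k n t.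
Proof.
move=> m i g gG; set w := nth 1 n m * nth 1 t i.
pose e (p : 'I_k * 'I_k) := @row_label _ k n t (p.2, p.1) * w.
have e_inj : injective e by move=> [a b] [a' b'] /mulIg /row_label_inj[-> ->].
have [p <-] : exists p, e p = g.
  apply: inj_card_onto_set e_inj _ _ g gG => [p|]; first by rewrite !groupM.
  exact: card_pairs.
by rewrite -(card_fiber_inj p e_inj); apply: eq_card => q; rewrite !inE block_entryE.
Qed.

Let expG_k x : x \in G -> x ^+ k = 1.
Proof. by move: x; apply/exponentP. Qed.

Lemma prod_block_entry m i (f g : 'I_k -> 'I_k) :
  \prod_(j < k) block_entry n t m i (f j) (g j) =
    \prod_(j < k) nth 1 t (f j) * \prod_(j < k) nth 1 n (g j).
Proof.
rewrite (eq_bigr _ (fun j _ => block_entryE m i (f j) (g j))) /row_label /=.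
rewrite !(prodMg_abelian cGG) => *; rewrite ?groupM //.
by rewrite !prod_const_ord !expG_k ?mulg1.
Qed.

Lemma based_table_is_pandiagonal_magic : is_pandiagonal_magic_blocks k n t.
Proof.
have prod_t (h : 'I_k -> 'I_k) : injective h -> \prod_(j < k) nth 1 t (h j) = 1.
  have [size_t t_sub _ _] := t_transversal.
  by move=> h_inj; rewrite (prod_nth_inj_abelian cGG) // => x /t_sub.
have prod_n (h : 'I_k -> 'I_k) : injective h -> \prod_(j < k) nth 1 n (h j) = 1.
  have [size_n [n_uniq mem_n]] := n_listing; have n_sub : {subset n <= G}.
    by move=> x; rewrite mem_n => /(subsetP sNG).
  move=> h_inj; rewrite (prod_nth_inj_abelian cGG) // -[RHS]prod_N1.
  exact: (prod_uniq_abelian cGG).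
have prod_const x : x \in G -> \prod_(j < k) x = 1.
  by rewrite prod_const_ord; apply: expG_k.
move=> m i c; have k_gt0 : 0 < k := leq_ltn_trans (leq0n c) (ltn_ord c).
pose diag (a : 'I_k) := Ordinal (ltn_pmod (a + c) k_gt0).
pose anti (a : 'I_k) := Ordinal (ltn_pmod (c + k - a) k_gt0).
have diag_inj : injective diag.
  move=> a a' /(congr1 val) /= /eqP; rewrite eqn_modDr !modn_small //.
  by move/eqP/ord_inj.
have anti_inj : injective anti.
  have le_ck (x : 'I_k) : x <= c + k by rewrite ltnW // ltn_addl.
  (* adding a + a' to both sides cancels the truncated subtractions *)
  move=> a a' /(congr1 val) /= /eqP; rewrite -(eqn_modDr (a + a')).
  rewrite addnA subnK // addnCA subnK // (addnC a) eqn_modDl !modn_small //.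
  by move/eqP/ord_inj.
split.
- by rewrite (prod_block_entry m i (fun=> c) id) prod_const ?prod_n ?mul1g.
- by rewrite (prod_block_entry m i id (fun=> c)) prod_const ?prod_t ?mulg1.
- by rewrite (prod_block_entry m i id diag) prod_t ?prod_n ?mulg1.
- by rewrite (prod_block_entry m i id anti) prod_t ?prod_n ?mulg1.
Qed.

End BasedTable.

Unset Implicit Arguments.

Theorem theorem4p1 (gT : finGroupType) (G N : {group gT}) (k : nat) :
  0 < k -> abelian G ->
  #|G| = (k ^ 2)%N -> exponent G %| k ->
  N \subset G -> #|N| = k ->
  \prod_(x in N) x = 1 ->
  \prod_(C in G / N) C = 1 ->
  forall n : seq gT, is_listing N k n ->
  exists t : seq gT,
    left_transversal_seq N G k t /\ pandiagonal_magic_cayley_sudoku G k n t.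
Proof.
move=> k_gt0 cGG oG expGk sNG oN prod_N1 prod_GN1 n n_listing.
have card_GN : #|G / N| = k.
  apply/eqP; rewrite card_quotient ?sub_abelian_norm // -(eqn_pmul2l k_gt0).
  by rewrite -{1}oN Lagrange // oG mulnn.
have [t t_transversal prod_t1] := exists_transversal_prod1 cGG sNG prod_GN1.
rewrite card_GN in t_transversal; exists t; split => //. split.
- exact: based_table_is_cayley cGG sNG oG n_listing t_transversal.
- exact: based_table_is_sudoku cGG sNG oG n_listing t_transversal.
- exact: based_table_is_pandiagonal_magic cGG sNG expGk prod_N1 prod_t1
    n_listing t_transversal.
Qed.
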